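(* Consider the Balancing with Conflicts game with $m=2$ machines. - If $n\ge4$, every strong Nash equilibrium $\vec s$ satisfies $c(\vec s)\le\left(\frac43+\frac{2}{3n}\right)c(\vec s^* )$. - If $n\le3$, every strong Nash equilibrium $\vec s$ satisfies $c(\vec s)=c(\vec s^* )$, i.e. the strong price of anarchy is $1$.
   Context: An instance of the Balancing with Conflicts (BwC) game consists of: - players $N=\{1,\dots,n\}$; - machines $M=\{1,\dots,m\}$; - a simple undirected graph $G=(N,E)$. A state is $\vec s\in M^n$, with $X_k(\vec s)=\{i:s_i=k\}$ and $x_k(\vec s)=|X_k(\vec s)|$. For $X\subseteq N$, $e(X)$ is the number of edges with both endpoints in $X$, and $e(\{i\},X)$ is the number of neighbours of $i$ in $X$. The cost of player $i$ with $s_i=k$ is $c_i(\vec s)=x_k(\vec s)+e(\{i\},X_k(\vec s))$. The social cost is $$c(\vec s)=\sum_ic_i(\vec s)=\sum_k\big(x_k(\vec s)^2+2e(X_k(\vec s))\big),$$ and $\vec s^*$ minimizes $c$. A state $\vec s$ is a strong Nash equilibrium if for every nonempty coalition $C\subseteq N$ and every joint deviation $\vec s_C'\in M^C$, some $i\in C$ has $c_i(\vec s)\le c_i(\vec s_C',\vec s_{-C})$. *)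

From mathcomp Require Import all_boot all_order.
Set Implicit Arguments. Unset Strict Implicit. Unset Printing Implicit Defensive.

Definition simple_graph n (E : rel 'I_n) : Prop :=
  irreflexive E /\ symmetric E.

Definition state n m := {ffun 'I_n -> 'I_m}.

Definition load n m (s : state n m) (k : 'I_m) : nat := #|[set j | s j == k]|.

Definition pcost n m (E : rel 'I_n) (s : state n m) (i : 'I_n) : nat :=
  load s (s i) + #|[set j | (s j == s i) && E i j]|.

Definition scost n m (E : rel 'I_n) (s : state n m) : nat :=
  \sum_(i < n) pcost E s i.

Definition deviate n m (s : state n m) (C : {set 'I_n}) (s' : state n m) : state n m :=
  [ffun i => if i \in C then s' i else s i].

Definition strongNE n m (E : rel 'I_n) (s : state n m) : Prop :=
  forall (C : {set 'I_n}) (s' : state n m), C != set0 ->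
    exists2 i, i \in C & pcost E s i <= pcost E (deviate s C s') i.

Definition optimal n m (E : rel 'I_n) (s : state n m) : Prop :=
  forall t : state n m, scost E s <= scost E t.

From mathcomp Require Import all_boot all_order.
From mathcomp Require Import zify.
Set Implicit Arguments. Unset Strict Implicit. Unset Printing Implicit Defensive.

(* Let s be a strong Nash equilibrium and t any state, and let K be the set of
   players on which t differs from s.  With two machines t is obtained from s
   by moving every player of K to the other machine ("flipping" K).  Applying
   the strong-equilibrium property to K, then to K minus the player it
   provides, and so on, peels K one player at a time; each peeled player k does
   not gain by flipping the current coalition.  Summing these inequalities
   telescopes against an explicit quadratic potential of the coalition
   ([potential_step]) and yields, after a pairwise comparison of costs,
        c(s) + q^2 + r^2 <= c(t) + (q + r) + 4qr,
   where q and r count the players of K on each machine of s.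
   Swapping the two machines of t preserves its cost, so we may assume
   |K| <= n/2; together with c(t) >= n^2/2 this gives the 4/3 + 2/(3n) bound,
   and for n <= 3 (so |K| <= 1) it gives c(s) <= c(t). *)

Section DoubleSums.
Variable T : finType.

Lemma sum_indicator (A : {set T}) : \sum_i (i \in A : nat) = #|A|.
Proof. by rewrite -sum1_card [RHS]big_mkcond; apply: eq_bigr => i _; case: (i \in A). Qed.

Lemma sum_indicator2 (A B : {set T}) :
  \sum_i \sum_j ((i \in A) * (j \in B)) = #|A| * #|B|.
Proof.
rewrite -sum_indicator big_distrl /=; apply: eq_bigr => i _.
by rewrite -big_distrr /= sum_indicator.
Qed.

Lemma dsumD (F G : T -> T -> nat) :
  \sum_i \sum_j (F i j + G i j) = \sum_i \sum_j F i j + \sum_i \sum_j G i j.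
Proof. by rewrite -big_split; apply: eq_bigr => i _; rewrite big_split. Qed.

Lemma dsumM c (F : T -> T -> nat) :
  \sum_i \sum_j (c * F i j) = c * \sum_i \sum_j F i j.
Proof. by rewrite big_distrr; apply: eq_bigr => i _; rewrite big_distrr. Qed.

(* If G agrees with F off row and column k, and exceeds it by h j on both
   the row and the column of k, then the double sum grows by 2 * sum h minus
   the doubly counted diagonal term h k. *)
Lemma dsum_update (F G : T -> T -> nat) (h : T -> nat) (k : T) :
  (forall i j, i != k -> j != k -> G i j = F i j) ->
  (forall j, G k j = F k j + h j) -> (forall i, G i k = F i k + h i) ->
  \sum_i \sum_j G i j + h k = \sum_i \sum_j F i j + 2 * \sum_j h j.
Proof.
move=> off row col.
have inner i : i != k -> \sum_j G i j = \sum_j F i j + h i.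
  move=> ik; rewrite (bigD1 k) //= [\sum_j F i j](bigD1 k) //= col.
  rewrite (eq_bigr (F i)) => [|j jk]; last exact: off.
  lia.
rewrite (bigD1 k) //= [\sum_i \sum_j F i j](bigD1 k) //=.
rewrite (eq_bigr (fun j => F k j + h j)) // big_split /= [\sum_j h j](bigD1 k) //=.
rewrite [\sum_(i | i != k) \sum_j G i j](eq_bigr (fun i => \sum_j F i j + h i));
  last exact: inner.
rewrite big_split /=; lia.
Qed.

Lemma sum_le_potential (f : T -> nat) (Psi : {set T} -> nat) :
  (forall K, K != set0 -> exists2 k, k \in K & f k + Psi (K :\ k) <= Psi K) ->
  forall K : {set T}, \sum_(k in K) f k <= Psi K.
Proof.
move=> step K; have [c] := ubnP #|K|; elim: c K => // c IH K; rewrite ltnS => cK.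
have [->|K0] := eqVneq K set0; first by rewrite big_set0.
have [k kK hk] := step K K0.
have IHk : \sum_(j in K :\ k) f j <= Psi (K :\ k).
  by apply: IH; rewrite (cardsD1 k K) kK in cK.
rewrite (big_setD1 k kK) /=; lia.
Qed.

End DoubleSums.

Definition other (x : 'I_2) : 'I_2 := if x == ord0 then ord_max else ord0.

Lemma other_eq (x y : 'I_2) : (other x == y) = (x != y).
Proof. by move: x y; do 2! case=> [[|[|//]]] ?. Qed.

Lemma other_inj (x y : 'I_2) : (other x == other y) = (x == y).
Proof. by move: x y; do 2! case=> [[|[|//]]] ?. Qed.

Lemma eq_machine (x y : 'I_2) : (x == y) = ((x == ord0) == (y == ord0)).
Proof. by move: x y; do 2! case=> [[|[|//]]] ?. Qed.

Definition flip_on n (f : state n 2) (K : {set 'I_n}) : state n 2 :=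
  [ffun i => if i \in K then other (f i) else f i].

Lemma flip_on_eq n (f : state n 2) (K : {set 'I_n}) i j :
  (flip_on f K i == flip_on f K j) = ((f i == f j) == ((i \in K) == (j \in K))).
Proof.
rewrite !ffunE; case: (i \in K); case: (j \in K); move: (f i) (f j);
by do 2! case=> [[|[|//]]] ?.
Qed.

Lemma flip_deviators n (s t : state n 2) : flip_on s [set i | t i != s i] = t.
Proof.
apply/ffunP => i; rewrite !ffunE inE; case: ifPn => [ne|/negPn/eqP //].
by apply/eqP; rewrite other_eq eq_sym.
Qed.

Lemma strongNE_flip n (E : rel 'I_n) (s : state n 2) : strongNE E s ->
  forall K, K != set0 -> exists2 k, k \in K & pcost E s k <= pcost E (flip_on s K) k.
Proof.
move=> hs K K0; have [k kK hk] := hs K [ffun i => other (s i)] K0.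
exists k => //; suff -> : flip_on s K = deviate s K [ffun i => other (s i)] by [].
by apply/ffunP => i; rewrite !ffunE.
Qed.

Lemma pcostE n m (E : rel 'I_n) (f : state n m) i :
  pcost E f i = \sum_j (f i == f j) * (1 + E i j).
Proof.
rewrite /pcost /load -!sum_indicator -big_split /=; apply: eq_bigr => j _.
by rewrite !inE eq_sym; case: (f i == f j); case: (E i j).
Qed.

Lemma scostE n m (E : rel 'I_n) (f : state n m) :
  scost E f = \sum_i \sum_j (f i == f j) * (1 + E i j).
Proof. by apply: eq_bigr => i _; rewrite pcostE. Qed.

Definition same_pairs n (f : state n 2) (K : {set 'I_n}) : nat :=
  \sum_i \sum_j ((i \in K) && (j \in K)) * (f i == f j).
Definition split_pairs n (f : state n 2) (K : {set 'I_n}) : nat :=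
  \sum_i \sum_j ((i \in K) && (j \in K)) * (f i != f j).

Section Potential.
Variables (n : nat) (E : rel 'I_n) (s : state n 2).
Hypotheses (Eirr : irreflexive E) (Esym : symmetric E).

Definition same_w (i j : 'I_n) : nat := (s i == s j) * (1 + E i j).
Definition cross_w (i j : 'I_n) : nat := (s i != s j) * (1 + E i j).

(* Removing k from K lowers it by exactly twice the
   cost of k after K flips, which is what makes the peeling telescope. *)
Definition potential_pair (K : {set 'I_n}) (i j : 'I_n) : nat :=
  ((i \in K) || (j \in K)) * cross_w i j + ((i \in K) && (j \in K)) * same_w i j.

Definition potential (K : {set 'I_n}) : nat :=
  \sum_i \sum_j potential_pair K i j + #|K|.

Lemma potential_step (K : {set 'I_n}) k : k \in K ->
  potential (K :\ k) + 2 * pcost E (flip_on s K) k = potential K.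
Proof.
move=> kK.
pose h j := (flip_on s K k == flip_on s K j) * (1 + E k j).
have hk : h k = 1 by rewrite /h eqxx Eirr.
have upd := @dsum_update _ (potential_pair (K :\ k)) (potential_pair K) h k.
have -> : pcost E (flip_on s K) k = \sum_j h j by rewrite pcostE.
rewrite /potential (cardsD1 k K) kK add1n.
suff: \sum_i \sum_j potential_pair K i j + h k =
      \sum_i \sum_j potential_pair (K :\ k) i j + 2 * \sum_j h j by rewrite hk; lia.
apply: upd.
- by move=> i j ik jk; rewrite /potential_pair !in_setD1 (negPf ik) (negPf jk).
- move=> j; rewrite /potential_pair /h /same_w /cross_w flip_on_eq !inE eqxx kK.
  have [->|jk] := eqVneq j k; first by rewrite eqxx Eirr.
  by case: (j \in K); case: (s k == s j); case: (E k j).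
- move=> i; rewrite /potential_pair /h /same_w /cross_w flip_on_eq !inE eqxx kK.
  have [->|ik] := eqVneq i k; first by rewrite eqxx Eirr kK.
  rewrite (Esym k i) (eq_sym (s k)).
  by case: (i \in K); case: (s i == s k); case: (E i k).
Qed.

Lemma sne_potential : strongNE E s ->
  forall K : {set 'I_n}, 2 * \sum_(k in K) pcost E s k <= potential K.
Proof.
move=> hs K; rewrite big_distrr /=; apply: sum_le_potential => {}K K0.
have [k kK hk] := strongNE_flip hs K0.
by exists k => //=; rewrite -(potential_step kK) addnC leq_add2l leq_mul2l hk orbT.
Qed.

Lemma sum_same_touching (K : {set 'I_n}) :
  \sum_i \sum_j ((i \in K) + (j \in K)) * same_w i j = 2 * \sum_(k in K) pcost E s k.
Proof.
have rows : \sum_i \sum_j (i \in K) * same_w i j = \sum_(k in K) pcost E s k.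
  rewrite [RHS]big_mkcond; apply: eq_bigr => i _.
  by rewrite -big_distrr pcostE /=; case: (i \in K); rewrite ?mul1n ?mul0n.
have cols : \sum_i \sum_j (j \in K) * same_w i j = \sum_i \sum_j (i \in K) * same_w i j.
  rewrite exchange_big; apply: eq_bigr => i _; apply: eq_bigr => j _.
  by rewrite /same_w eq_sym Esym.
under eq_bigr => i _ do under eq_bigr => j _ do rewrite mulnDl.
by rewrite dsumD cols rows addnn mul2n.
Qed.

(* Main inequality: comparing c(s) with the cost of s with K flipped, pair by
   pair, the potential bound leaves only |K| and the pairs inside K. *)
Lemma sne_flip_bound (K : {set 'I_n}) : strongNE E s ->
  scost E s + same_pairs s K <= scost E (flip_on s K) + #|K| + 2 * split_pairs s K.
Proof.
move=> hs; have pot := sne_potential hs K.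
have pointwise i j :
    same_w i j + potential_pair K i j + ((i \in K) && (j \in K)) * (s i == s j)
    <= (flip_on s K i == flip_on s K j) * (1 + E i j)
       + ((i \in K) + (j \in K)) * same_w i j
       + 2 * (((i \in K) && (j \in K)) * (s i != s j)).
  rewrite /potential_pair /same_w /cross_w flip_on_eq.
  by case: (i \in K); case: (j \in K); case: (s i == s j); case: (E i j).
have cs : scost E s = \sum_i \sum_j same_w i j := scostE E s.
have total : scost E s + \sum_i \sum_j potential_pair K i j + same_pairs s K
    <= scost E (flip_on s K) + 2 * \sum_(k in K) pcost E s k + 2 * split_pairs s K.
  rewrite cs scostE -sum_same_touching /same_pairs /split_pairs -dsumM -!dsumD.
  by apply: leq_sum => i _; apply: leq_sum => j _; exact: pointwise.
rewrite /potential in pot; lia.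
Qed.
End Potential.

Lemma pair_counts n (f : state n 2) (K : {set 'I_n}) :
  exists q r, [/\ #|K| = q + r, same_pairs f K = q * q + r * r
                & split_pairs f K = 2 * (q * r)].
Proof.
set Z := [set i | f i == ord0].
exists #|K :&: Z|, #|K :\: Z|; split; first by rewrite cardsID.
- rewrite /same_pairs -!sum_indicator2 -dsumD.
  apply: eq_bigr => i _; apply: eq_bigr => j _; rewrite !inE eq_machine.
  by case: (i \in K); case: (j \in K); case: (f i == ord0); case: (f j == ord0).
- have -> : 2 * (#|K :&: Z| * #|K :\: Z|)
          = #|K :&: Z| * #|K :\: Z| + #|K :\: Z| * #|K :&: Z|.
    by rewrite [#|K :\: Z| * _]mulnC addnn -mul2n.
  rewrite /split_pairs -!sum_indicator2 -dsumD.
  apply: eq_bigr => i _; apply: eq_bigr => j _; rewrite !inE eq_machine.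
  by case: (i \in K); case: (j \in K); case: (f i == ord0); case: (f j == ord0).
Qed.

(* Every state costs at least n^2 / 2, since the loads q, r satisfy
   q + r = n and the cost is at least q^2 + r^2. *)
Lemma scost_lower_bound n (E : rel 'I_n) (t : state n 2) : n * n <= 2 * scost E t.
Proof.
have [q [r [card sp _]]] := pair_counts t [set: 'I_n].
have le : same_pairs t [set: 'I_n] <= scost E t.
  rewrite scostE; apply: leq_sum => i _; apply: leq_sum => j _.
  by rewrite !in_setT; case: (t i == t j).
rewrite cardsT card_ord in card; have := (nat_Cauchy q r).1; nia.
Qed.

(* Swapping the machine names of t keeps its cost and complements its set of
   deviators from s, so some state of the same cost deviates on at most n/2
   players. *)
Lemma swap_machines n (E : rel 'I_n) (s t : state n 2) :
  exists t' : state n 2,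
    scost E t' = scost E t /\ 2 * #|[set i | t' i != s i]| <= n.
Proof.
pose t' : state n 2 := [ffun i => other (t i)].
have cost : scost E t' = scost E t.
  rewrite !scostE; apply: eq_bigr => i _; apply: eq_bigr => j _.
  by rewrite !ffunE other_inj.
have split : #|[set i | t i != s i]| + #|[set i | t' i != s i]| = n.
  rewrite -[RHS](card_ord n) -(cardsC [set i | t i != s i]); congr (_ + _).
  by apply: eq_card => i; rewrite !inE ffunE other_eq negbK.
have [small|large] := leqP (2 * #|[set i | t i != s i]|) n.
- by exists t.
- by exists t'; split => //; lia.
Qed.

Lemma sne_cost_bound n (E : rel 'I_n) (hE : simple_graph E) (s t : state n 2) :
  strongNE E s ->
  let x := #|[set i | t i != s i]| in
  2 * scost E s <= 2 * scost E t + 2 * x + x * x /\ (x <= 1 -> scost E s <= scost E t).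
Proof.
move=> hs x; have [Eirr Esym] := hE.
have := sne_flip_bound Eirr Esym [set i | t i != s i] hs.
rewrite flip_deviators; have [q [r [card sp dp]]] := pair_counts s [set i | t i != s i].
rewrite sp dp => bound; rewrite /x card; have := (nat_Cauchy q r).1.
split; [nia | move=> x1; nia].
Qed.

Lemma spoa_arith n x c copt :
  4 <= n -> 2 * x <= n -> n * n <= 2 * copt ->
  2 * c <= 2 * copt + 2 * x + x * x -> 3 * n * c <= (4 * n + 2) * copt.
Proof.
move=> n4 xn lb h.
have sq : 4 * (x * x) <= n * n by have := leq_mul xn xn; lia.
have cube : 4 * (n * n) <= n * (n * n) by rewrite leq_mul2r n4 orbT.
have lbn : (n + 2) * (n * n) <= (n + 2) * (2 * copt) by rewrite leq_mul2l lb orbT.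
nia.
Qed.

Theorem theorem14 (n : nat) (E : rel 'I_n) (hE : simple_graph E)
    (s sopt : state n 2) (hs : strongNE E s) (hopt : optimal E sopt) :
  (4 <= n -> 3 * n * scost E s <= (4 * n + 2) * scost E sopt) /\
  (n <= 3 -> scost E s = scost E sopt).
Proof.
have [t [cost few]] := swap_machines E s sopt.
have [near single] := sne_cost_bound hE t hs.
rewrite cost in near single; split => hn.
- exact: spoa_arith hn few (scost_lower_bound E sopt) near.
- by apply/eqP; rewrite eqn_leq hopt single //; lia.
Qed.
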